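(* Let $G$ be a finite EPO group. Then $\mathcal{S}(G)$ is cyclically separable if and only if either $pq$ divides $|G|$ for some primes $p > q \geq 5$, or at least two of the following three conditions hold: (i) $p$ divides $|G|$ for some prime $p \geq 5$; (ii) $3$ divides $|G|$ and $G$ has a Sylow $3$-subgroup which is not cyclic or is not normal in $G$; (iii) $2$ divides $|G|$ and $G$ has a Sylow $2$-subgroup which is not cyclic or is not normal in $G$.
   Context: A finite group is an EPO group if every non-identity element has prime order. All graphs are simple and undirected. For a finite group $G$, the order supergraph $\mathcal{S}(G)$ is the graph with vertex set $G$ in which two distinct vertices $x,y$ are adjacent if and only if the order of $x$ divides the order of $y$ or the order of $y$ divides the order of $x$. For a graph $\Gamma$, a vertex cutset is a set $S$ of vertices such that $\Gamma - S$ is disconnected; a cyclic vertex cutset is a vertex cutset $S$ such that $\Gamma - S$ has at least two connected components each of which contains a cycle. $\Gamma$ is called cyclically separable if it has a cyclic vertex cutset. *)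

From mathcomp Require Import all_boot all_fingroup all_solvable.
Set Implicit Arguments. Unset Strict Implicit. Unset Printing Implicit Defensive.
Local Open Scope group_scope.

Definition EPO (gT : finGroupType) (G : {group gT}) : Prop :=
  forall x, x \in G -> x != 1 -> prime #[x].

(* Adjacency of the order supergraph S(G) (vertex set G): distinct x, y
   whose orders divide one another. *)
Definition osg_adj (gT : finGroupType) : rel gT :=
  fun x y => (x != y) && ((#[x] %| #[y]) || (#[y] %| #[x])).

Definition induced (T : finType) (e : rel T) (W : {set T}) : rel T :=
  fun x y => [&& x \in W, y \in W & e x y].

Definition component (T : finType) (e : rel T) (W : {set T}) (x : T) : {set T} :=
  [set z in W | connect (induced e W) x z].

Definition is_cycle (T : finType) (e : rel T) (c : seq T) : bool :=
  [&& 3 <= size c, uniq c & path.cycle e c].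

Definition has_cycle_in (T : finType) (e : rel T) (C : {set T}) : Prop :=
  exists c : seq T, is_cycle e c /\ {subset c <= C}.

Definition cyclic_vertex_cutset (T : finType) (e : rel T) (V S : {set T}) : Prop :=
  exists x y, [/\ x \in V :\: S, y \in V :\: S,
     ~~ connect (induced e (V :\: S)) x y,
     has_cycle_in e (component e (V :\: S) x) &
     has_cycle_in e (component e (V :\: S) y)].

Definition cyclically_separable (T : finType) (e : rel T) (V : {set T}) : Prop :=
  exists S : {set T}, cyclic_vertex_cutset e V S.

Definition bad_sylow (gT : finGroupType) (G : {group gT}) (p : nat) : Prop :=
  exists P : {group gT}, P \in 'Syl_p(G) /\ (~~ cyclic P \/ ~~ (P <| G)).

(* In an EPO group adjacent non-identity vertices of the order supergraph have
   the same prime order, while the identity is adjacent to everything. Hence a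
   vertex cutset must contain 1, each component of what remains consists of
   elements of a single prime order, and such a component carries a cycle
   exactly when there are at least three elements of that order. Two cycled
   components therefore amount to two distinct primes p, q each with at least
   three elements of that order. For p >= 5 this just says p divides |G| (take
   x, x^2, x^3); for p = 2, 3 it says the Sylow p-subgroup is not cyclic of
   order p and normal, which for an EPO group means it is not cyclic or not
   normal. *)
From mathcomp Require Import all_boot all_fingroup all_solvable.
Set Implicit Arguments. Unset Strict Implicit. Unset Printing Implicit Defensive.
Local Open Scope group_scope.

Definition elements_of_order (gT : finGroupType) (G : {set gT}) (n : nat) :=
  [set x in G | #[x] == n].

Section ElementsOfOrder.

Variables (gT : finGroupType) (G : {group gT}).

Lemma prime_order_neq1 (x : gT) : prime #[x] -> x != 1.
Proof. by rewrite -order_gt1; apply: prime_gt1. Qed.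

Lemma elements_of_order_dvdG n : 0 < #|elements_of_order G n| -> n %| #|G|.
Proof. by case/card_gt0P => x; rewrite inE => /andP[xG /eqP <-]; apply: order_dvdG. Qed.

Lemma order_expg_prime (x : gT) p k : #[x] = p -> prime p -> 0 < k < p ->
  #[x ^+ k] = p.
Proof.
move=> ox pp /andP[k_gt0 lt_kp]; rewrite orderXgcd ox.
have /eqP-> : coprime p k by rewrite prime_coprime // gtnNdvd.
by rewrite divn1.
Qed.

Lemma elements_of_order_large_prime p : prime p -> 3 < p -> p %| #|G| ->
  2 < #|elements_of_order G p|.
Proof.
move=> pp p_gt3 pG; have [x xG ox] := Cauchy pp pG.
have xkE k : 0 < k < 4 -> x ^+ k \in elements_of_order G p.
  move=> /andP[k_gt0 k_lt4]; rewrite inE groupX //=.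
  by rewrite (order_expg_prime ox) // k_gt0 (leq_trans k_lt4).
have neq_xk i j : i < 4 -> j < 4 -> i != j -> x ^+ i != x ^+ j.
  by move=> i_lt4 j_lt4 ij; rewrite eq_expg_mod_order ox !modn_small ?(leq_trans _ p_gt3).
apply/card_gt2P; exists (x ^+ 1), (x ^+ 2), (x ^+ 3).
by split; split; rewrite ?xkE ?neq_xk.
Qed.

Hypothesis epoG : EPO G.

Lemma elements_of_order_prime n : 1 < #|elements_of_order G n| -> prime n.
Proof.
case/card_gt1P => x [y [+ + xy]]; rewrite !inE => /andP[xG /eqP ox] /andP[yG /eqP oy].
have [x1 | x_neq1] := eqVneq x 1.
  by rewrite -oy epoG // -x1 eq_sym.
by rewrite -ox epoG.
Qed.

Lemma order_pgroup_elt (P : {group gT}) p x : prime p -> p.-group P ->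
  P \subset G -> x \in P -> x != 1 -> #[x] = p.
Proof.
move=> pp pP sPG xP x_neq1.
have := mem_p_elt pP xP; rewrite /p_elt pnatE ?epoG ?(subsetP sPG) //.
by move/eqP.
Qed.

Lemma cyclic_normal_Sylow_elements p (P : {group gT}) : prime p ->
  p.-Sylow(G) P -> cyclic P -> P <| G -> #|elements_of_order G p| < p.
Proof.
move=> pp sylP /cyclicP[g defP] nPG.
have [sPG pP _] := and3P sylP.
have sub1 : elements_of_order G p \subset P :\ 1.
  apply/subsetP => x; rewrite !inE => /andP[xG /eqP ox].
  rewrite (mem_normal_Hall sylP nPG xG) /p_elt ox pnat_id // andbT.
  by rewrite prime_order_neq1 ?ox.
have le_Pp : #|P| <= p.
  rewrite defP -/#[g]; have [-> | g_neq1] := eqVneq g 1.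
    by rewrite order1 prime_gt0.
  by rewrite (order_pgroup_elt pp pP sPG) // defP cycle_id.
have /= card_P := cardsD1 1 P; rewrite group1 in card_P.
rewrite (leq_ltn_trans (subset_leq_card sub1)) //.
by rewrite card_P in le_Pp.
Qed.

Lemma bad_sylow_independent_elements p : prime p -> bad_sylow G p ->
  exists x y, [/\ x \in G, y \in G, #[x] = p, #[y] = p & y \notin <[x]>].
Proof.
move=> pp [P [+ bad_P]]; rewrite inE => sylP.
have [sPG pP _] := and3P sylP.
have ordP := order_pgroup_elt pp pP sPG.
have [P1 | /trivgPn[x xP x_neq1]] := eqVneq P 1%G.
  by move: bad_P; rewrite P1 cyclic1 normal1; case.
have xG := subsetP sPG x xP.
have sxP : <[x]> \subset P by rewrite cycle_subG.
have yx_ok y : y \in G -> y \notin <[x]> -> #[y] = p -> exists x y,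
    [/\ x \in G, y \in G, #[x] = p, #[y] = p & y \notin <[x]>].
  by move=> yG y_notin oy; exists x, y; rewrite xG yG oy ordP.
case: bad_P => [ncycP | nnormP].
  have /subsetPn[y yP y_notin] : ~~ (P \subset <[x]>).
    apply: contra ncycP => sPx; rewrite (_ : P = <[x]>%G) ?cycle_cyclic //.
    by apply/val_inj/eqP; rewrite eqEsubset sPx sxP.
  have y_neq1 : y != 1 by apply: contraNneq y_notin => ->; apply: group1.
  exact: yx_ok (subsetP sPG y yP) y_notin (ordP y yP y_neq1).
have [g gG /subsetPn[y yPg y_notinP]] : exists2 g, g \in G & ~~ (P :^ g \subset P).
  apply/exists_inP; move: nnormP; apply: contraNT => /exists_inPn sPgP.
  rewrite /normal sPG; apply/subsetP => g gG; apply/normP/eqP.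
  by rewrite eqEcard cardJg leqnn andbT; apply/negbNE/sPgP.
have y_conjP : y ^ g^-1 \in P by rewrite -mem_conjg.
have yG : y \in G by rewrite -(conjgKV g y) groupJ // (subsetP sPG).
apply: yx_ok yG (contra (subsetP sxP y) y_notinP) _.
rewrite -(orderJ y g^-1) ordP // conjg_eq1.
by apply: contraNneq y_notinP => ->; apply: group1.
Qed.

Lemma elements_of_order_odd_prime p x y : prime p -> p != 2 ->
  x \in G -> y \in G -> #[x] = p -> #[y] = p -> y \notin <[x]> ->
  2 < #|elements_of_order G p|.
Proof.
move=> pp p_neq2 xG yG ox oy y_notin; apply/card_gt2P; exists x, x^-1, y.
rewrite !inE groupV xG yG orderV ox oy eqxx; split=> //; split.
- apply: contraNneq p_neq2 => xVx.
  by rewrite -dvdn_prime2 // -ox order_dvdn expgS expg1 {2}xVx mulgV.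
- by apply: contra y_notin => /eqP <-; rewrite groupV cycle_id.
- by apply: contra y_notin => /eqP ->; apply: cycle_id.
Qed.

(* Two commuting involutions give the third one [x * y]; otherwise [x ^ y]. *)
Lemma elements_of_order2 x y : x \in G -> y \in G -> #[x] = 2 -> #[y] = 2 ->
  x != y -> 2 < #|elements_of_order G 2|.
Proof.
move=> xG yG ox oy xy; have [x_neq1 y_neq1] : x != 1 /\ y != 1.
  by rewrite !prime_order_neq1 ?ox ?oy.
have xE : x \in elements_of_order G 2 by rewrite inE xG ox.
have yE : y \in elements_of_order G 2 by rewrite inE yG oy.
apply/card_gt2P; have [cxy | ncxy] := eqVneq (x * y) (y * x).
  have xV : x^-1 = x by rewrite invg_expg ox.
  have xy_neq1 : x * y != 1.
    apply: contraNneq xy => xy1.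
    have: x^-1 * (x * y) = x^-1 by rewrite xy1 mulg1.
    by rewrite mulKg xV => ->.
  exists x, y, (x * y); rewrite xE yE inE groupM //=; split; split=> //.
  - rewrite -dvdn_prime2 ?epoG ?groupM // order_dvdn expgMn //.
    by rewrite -{1}ox -oy !expg_order mulg1.
  - by rewrite -{1}[y]mul1g (inj_eq (mulIg y)) eq_sym.
  - by rewrite -{2}[x]mulg1 (inj_eq (mulgI x)).
exists x, y, (x ^ y); rewrite xE yE inE groupJ //= orderJ ox eqxx.
split=> //; split=> //.
- apply: contra xy => /eqP yxy; apply/eqP/(conjg_inj y).
  by rewrite -yxy conjgE mulKg.
- by rewrite (sameP eqP conjg_fixP); apply: contra ncxy => /commgP/eqP.
Qed.

Lemma bad_sylow_elements_of_order p : p = 2 \/ p = 3 ->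
  p %| #|G| /\ bad_sylow G p <-> 2 < #|elements_of_order G p|.
Proof.
move=> p23; have pp : prime p by case: p23 => ->.
split=> [[_ bad_p] | gt2].
  have [x [y [xG yG ox oy y_notin]]] := bad_sylow_independent_elements pp bad_p.
  case: p23 ox oy => -> ox oy.
    apply: elements_of_order2 xG yG ox oy _.
    by apply: contraNneq y_notin => <-; apply: cycle_id.
  exact: elements_of_order_odd_prime xG yG ox oy y_notin.
split; first by rewrite elements_of_order_dvdG // ltnW // ltnW.
have [P sylP] := Sylow_exists p G.
exists P; split; first by rewrite inE.
apply/orP; rewrite -negb_and; apply/andP => -[cP nPG].
have := leq_ltn_trans gt2 (cyclic_normal_Sylow_elements pp sylP cP nPG).
by case: p23 => ->.
Qed.

End ElementsOfOrder.

Lemma has_cycle_inS (T : finType) (e : rel T) (A B : {set T}) :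
  A \subset B -> has_cycle_in e A -> has_cycle_in e B.
Proof. by move=> sAB [c [cyc_c sub_c]]; exists c; split=> // x /sub_c/(subsetP sAB). Qed.

Section OrderSupergraph.

Variables (gT : finGroupType) (G : {group gT}).

Local Notation adj := (@osg_adj gT).

Lemma osg_adj_eq_order (x y : gT) : x != y -> #[x] = #[y] -> adj x y.
Proof. by move=> xy oxy; rewrite /osg_adj xy oxy dvdnn. Qed.

(* Otherwise 1, being adjacent to every other vertex, would connect x and y. *)
Lemma disconnected_notin1 (W : {set gT}) x y : x \in W -> y \in W ->
  ~~ connect (induced adj W) x y -> 1 \notin W.
Proof.
move=> xW yW; apply: contra => W1; apply: (connect_trans (y := 1)).
  have [-> | x_neq1] := eqVneq x 1; first exact: connect0.
  by apply: connect1; rewrite /induced xW W1 /osg_adj x_neq1 order1 dvd1n orbT.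
have [-> | y_neq1] := eqVneq y 1; first exact: connect0.
by apply: connect1; rewrite /induced yW W1 /osg_adj eq_sym y_neq1 order1 dvd1n.
Qed.

Lemma elements_of_order_sub_component p a : prime p ->
  a \in elements_of_order G p ->
  elements_of_order G p \subset component adj (G :\ 1) a.
Proof.
move=> pp; rewrite inE => /andP[aG /eqP oa]; apply/subsetP => b.
rewrite !inE => /andP[bG /eqP ob].
have b_neq1 : b != 1 by rewrite prime_order_neq1 ?ob.
rewrite b_neq1 bG /=; have [-> | ab] := eqVneq a b; first exact: connect0.
apply: connect1; rewrite /induced !inE aG bG b_neq1.
by rewrite prime_order_neq1 ?oa // osg_adj_eq_order // oa ob.
Qed.

Lemma elements_of_order_has_cycle p : 2 < #|elements_of_order G p| ->
  has_cycle_in adj (elements_of_order G p).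
Proof.
case/card_gt2P => a [b [c [[aE bE cE] [ab bc ca]]]].
have same_order u v : u \in elements_of_order G p -> v \in elements_of_order G p ->
    u != v -> adj u v.
  rewrite !inE => /andP[_ /eqP ou] /andP[_ /eqP ov] uv.
  by rewrite osg_adj_eq_order ?ou ?ov.
exists [:: a; b; c]; split.
  by rewrite /is_cycle /= !inE negb_or ab eq_sym ca bc !same_order.
by apply/allP; rewrite /= aE bE cE.
Qed.

Hypothesis epoG : EPO G.

Lemma osg_adj_order (x y : gT) : x \in G -> y \in G -> x != 1 -> y != 1 ->
  adj x y -> #[x] = #[y].
Proof.
move=> xG yG x_neq1 y_neq1 /andP[_ /orP[] dv_xy]; apply/eqP.
  by rewrite -dvdn_prime2 ?epoG.
by rewrite eq_sym -dvdn_prime2 ?epoG.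
Qed.

Lemma connect_osg_order (W : {set gT}) x z : W \subset G -> 1 \notin W ->
  connect (induced adj W) x z -> #[x] = #[z].
Proof.
move=> sWG W1 conn_xz.
have same_order : closed (induced adj W) [pred u | #[u] == #[x]].
  move=> u v /and3P[uW vW uv] /=; congr (_ == _).
  have notin1 w : w \in W -> w != 1 by move=> wW; apply: contraNneq W1 => <-.
  by apply: osg_adj_order; rewrite ?notin1 ?(subsetP sWG).
have := closed_connect same_order conn_xz.
by rewrite !inE /= eqxx => /esym/eqP.
Qed.

Lemma component_has_cycle_elements (W : {set gT}) z : W \subset G -> 1 \notin W ->
  has_cycle_in adj (component adj W z) -> 2 < #|elements_of_order G #[z]|.
Proof.
move=> sWG W1 [[|a [|b [|c s]]] [/and3P[size_c uniq_c _] sub_c]] //.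
have inE_z u : u \in [:: a, b, c & s] -> u \in elements_of_order G #[z].
  move/sub_c; rewrite !inE => /andP[uW conn_zu].
  by rewrite (subsetP sWG) //= (connect_osg_order sWG W1 conn_zu).
move: uniq_c; rewrite /= !inE !negb_or => /and3P[/and3P[ab ac _] /andP[bc _] _].
apply/card_gt2P; exists a, b, c; split; last by rewrite ab bc eq_sym ac.
by rewrite !inE_z // !inE eqxx ?orbT.
Qed.

Theorem cyclically_separable_osgP : cyclically_separable adj G <->
  exists p q, [/\ p != q, 2 < #|elements_of_order G p| & 2 < #|elements_of_order G q|].
Proof.
split=> [[S [x [y [xW yW nxy cyc_x cyc_y]]]] | [p [q [neq_pq gt2p gt2q]]]].
  have sWG : G :\: S \subset G := subsetDl G S.
  have W1 := disconnected_notin1 xW yW nxy.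
  exists #[x], #[y]; rewrite !(component_has_cycle_elements sWG W1) //; split=> //.
  apply: contra nxy => /eqP oxy; have [-> | xy] := eqVneq x y; first exact: connect0.
  by apply: connect1; rewrite /induced xW yW osg_adj_eq_order.
have [a aE] : exists a, a \in elements_of_order G p by apply/card_gt0P/ltnW/ltnW.
have [b bE] : exists b, b \in elements_of_order G q by apply/card_gt0P/ltnW/ltnW.
have [pp pq] := (elements_of_order_prime epoG (ltnW gt2p),
                       elements_of_order_prime epoG (ltnW gt2q)).
have sub_a := elements_of_order_sub_component pp aE.
have sub_b := elements_of_order_sub_component pq bE.
have [aW bW] : a \in G :\ 1 /\ b \in G :\ 1.
  move: (subsetP sub_a a aE) (subsetP sub_b b bE).
  by rewrite !inE => /andP[-> _] /andP[-> _].
exists [set 1], a, b; split=> //.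
- apply: contra neq_pq => /(connect_osg_order (subsetDl G _)); rewrite setD11 => /(_ isT).
  by move: aE bE; rewrite !inE => /andP[_ /eqP<-] /andP[_ /eqP<-] ->.
- exact: has_cycle_inS sub_a (elements_of_order_has_cycle gt2p).
- exact: has_cycle_inS sub_b (elements_of_order_has_cycle gt2q).
Qed.

End OrderSupergraph.

Lemma two_primes_cases (n : nat) (A : nat -> Prop) :
  (forall p, A p -> prime p) -> (forall p, prime p -> 5 <= p -> A p <-> p %| n) ->
  (exists p q, [/\ p != q, A p & A q]) <->
  (exists p q, [/\ prime p, prime q, 5 <= q, q < p & p * q %| n]) \/
  (let c1 := exists p, [/\ prime p, 5 <= p & p %| n] in
   (c1 /\ A 3) \/ (c1 /\ A 2) \/ (A 3 /\ A 2)).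
Proof.
move=> A_prime A_big; cbv zeta.
have A_cases r : A r -> [\/ [/\ prime r, 5 <= r & r %| n], r = 3 | r = 2].
  move=> Ar; have pr := A_prime r Ar.
  have [r_ge5 | r_lt5] := leqP 5 r; first by constructor 1; split=> //; apply/A_big.
  by move: pr r_lt5; case: r {Ar} => [|[|[|[|[|]]]]] //; constructor.
have dvd_mul r s : prime r -> prime s -> r != s -> r %| n -> s %| n -> r * s %| n.
  by move=> pr ps rs rn sn; rewrite Gauss_dvd ?rn // prime_coprime // dvdn_prime2.
split=> [[p [q [neq_pq Ap Aq]]] | ].
  case: (A_cases p Ap) => [[pp p5 pn] | p3 | p2];
    case: (A_cases q Aq) => [[pq q5 qn] | q3 | q2]; subst => //.
  - left; have [lt_pq | lt_qp | eq_pq] := ltngtP p q.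
    + by exists q, p; rewrite dvd_mul // eq_sym.
    + by exists p, q; rewrite dvd_mul.
    + by rewrite eq_pq eqxx in neq_pq.
  - by right; left; split=> //; exists p.
  - by right; right; left; split=> //; exists p.
  - by right; left; split=> //; exists q.
  - by right; right; right.
  - by right; right; left; split=> //; exists q.
  - by right; right; right.
case=> [[p [q [pp pq q5 qp pqn]]] |
        [[[p [pp p5 pn]] A3] | [[[p [pp p5 pn]] A2] | [A3 A2]]]].
- exists p, q; rewrite gtn_eqF //; split=> //; apply/A_big => //.
  + exact: leq_trans (ltnW qp).
  + exact: dvdn_trans (dvdn_mulr _ _) pqn.
  + exact: dvdn_trans (dvdn_mull _ _) pqn.
- by exists p, 3; rewrite gtn_eqF ?(ltnW p5) //; split=> //; apply/A_big.
- by exists p, 2; rewrite gtn_eqF ?(ltn_trans _ p5) //; split=> //; apply/A_big.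
- by exists 3, 2.
Qed.

Theorem mainTheorem4 (gT : finGroupType) (G : {group gT}) :
  EPO G ->
  (cyclically_separable (@osg_adj gT) G <->
   ((exists p q : nat, [/\ prime p, prime q, 5 <= q, q < p & p * q %| #|G|]) \/
    (let c1 := exists p : nat, [/\ prime p, 5 <= p & p %| #|G|] in
     let c2 := (3 %| #|G|) /\ bad_sylow G 3 in
     let c3 := (2 %| #|G|) /\ bad_sylow G 2 in
     (c1 /\ c2) \/ (c1 /\ c3) \/ (c2 /\ c3)))).
Proof.
move=> epoG.
have A_prime p : 2 < #|elements_of_order G p| -> prime p.
  by move/ltnW; apply: elements_of_order_prime.
have A_big p : prime p -> 5 <= p -> 2 < #|elements_of_order G p| <-> p %| #|G|.
  move=> pp p5; split; last exact: elements_of_order_large_prime (ltnW p5).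
  by move/ltnW/ltnW; apply: elements_of_order_dvdG.
have := bad_sylow_elements_of_order epoG (or_intror erefl).
have := bad_sylow_elements_of_order epoG (or_introl erefl).
have := two_primes_cases A_prime A_big.
have := cyclically_separable_osgP epoG.
cbv zeta; tauto.
Qed.
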